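(* Let $x=(x_1,\dots,x_m)$ and let $y=(y_1,y_2,\dots)$ be a countably infinite alphabet. With $\epsilon_{a,t}$ acting on the $y$-variables, \[\epsilon_{ut^{m-1},t}\bigl(F(u;x,y;t)\bigr)=\prod_{i=1}^m\frac{1-ut^{m-i}}{1-ut^{m-1}x_i}\] and \[\epsilon_{a,t}\bigl(F(1;x,y;t)\bigr)=t^{\binom m2}x_1\cdots x_m\prod_{i=1}^m\frac{1-at^{1-i}}{1-ax_i}.\]
   Context: For $x=(x_1,\dots,x_m)$ and infinite $y$, \[F(u;x,y;t)=\sum_{I\subseteq\{1,\dots,m\}}(-u)^{|I|}t^{\binom{|I|}{2}}\prod_{i\in I,\ j\in\{1,\dots,m\}\setminus I}\frac{tx_i-x_j}{x_i-x_j}\prod_{i\in I}\prod_{j\ge1}\frac{1-x_iy_j}{1-tx_iy_j},\] where $\prod_{j\ge1}\frac{1-zy_j}{1-tzy_j}=\exp\bigl(-\sum_{r\ge1}(1-t^r)z^rp_r(y)/r\bigr)$ is a formal power series in $z$ whose coefficients are symmetric functions of $y$, $p_r(y)=\sum_j y_j^r$ being the power sums. The specialization $\epsilon_{a,t}$ is the ring homomorphism from symmetric functions in $y$ (over the field of rational functions in the parameters) defined by $\epsilon_{a,t}(p_r)=(1-a^r)/(1-t^r)$, applied coefficientwise; the identities are understood as identities of rational functions / their power series expansions. *)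

From mathcomp Require Import all_boot all_order all_algebra.
From mathcomp Require Import mpoly.

Set Implicit Arguments.
Unset Strict Implicit.
Unset Printing Implicit Defensive.

Import Order.TTheory GRing.Theory.
Local Open Scope ring_scope.

Definition ps1 (R : ringType) : nat -> R := fun n => (n == 0%N)%:R.

Definition psmul (R : ringType) (f g : nat -> R) : nat -> R :=
  fun n => \sum_(i < n.+1) f i * g (n - i)%N.

Definition pspow (R : ringType) (f : nat -> R) (k : nat) : nat -> R :=
  iter k (psmul f) (@ps1 R).

(* exp of a power series with zero constant term, over a K-algebra R *)
Definition psexp (K : fieldType) (R : lalgType K) (f : nat -> R) : nat -> R :=
  fun n => \sum_(k < n.+1) ((k`!)%:R : K)^-1 *: pspow f k n.

Definition psshift (R : ringType) (m : nat) (f : nat -> R) : nat -> R :=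
  fun n => if (m <= n)%N then f (n - m)%N else 0.

Definition geo (R : ringType) (c : R) : nat -> R := fun n => c ^+ n.

(* ---------- symmetric functions via power sums ----------
   Over a field of characteristic 0, Lambda = K[p_1, p_2, ...].  The coefficient
   of z^n in prod_j (1 - z y_j)/(1 - t z y_j) = exp(-sum_r (1-t^r) z^r p_r / r)
   only involves p_1..p_n, so we compute it in K[p_1,...,p_{n+1}] =
   {mpoly K[n.+1]}, where the variable 'X_i stands for p_{i+1}. *)
Definition psum (K : fieldType) (n r : nat) : {mpoly K[n.+1]} :=
  'X_(inord r.-1).

Definition hcoef (K : fieldType) (t : K) (n : nat) : {mpoly K[n.+1]} :=
  psexp (fun r => if r == 0%N then 0
                  else - ((1 - t ^+ r) / r%:R) *: psum K n r) n.

Definition eps (K : fieldType) (a t : K) (n : nat) (f : {mpoly K[n.+1]}) : K :=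
  f.@[fun i : 'I_n.+1 => (1 - a ^+ i.+1) / (1 - t ^+ i.+1)].

(* eps_{a,t} applied coefficientwise to prod_j (1 - w y_j)/(1 - t w y_j),
   evaluated at w = z * x_i (homogenized in an auxiliary variable z) *)
Definition eprod (K : fieldType) (a t w : K) : nat -> K :=
  fun n => eps a t (hcoef t n) * w ^+ n.

(* eps_{a,t}(F(u; z*x, y; t)) as a power series in z *)
Definition epsF (K : fieldType) (m : nat) (u a t : K) (x : 'I_m -> K) : nat -> K :=
  fun n => \sum_(I : {set 'I_m})
     (- u) ^+ #|I| * t ^+ 'C(#|I|, 2)
     * (\prod_(i in I) \prod_(j in ~: I) ((t * x i - x j) / (x i - x j)))
     * (\big[@psmul K/@ps1 K]_(i in I) eprod a t (x i)) n.

(* Under eps_{a,t}, the y-product attached to x_i becomes (1 - z x_i)/(1 - a z x_i): its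
   logarithm is -sum_r (1 - a^r) (z x_i)^r / r, and the truncated exponential of this series is
   identified with (1 - z)/(1 - a z) through the differential equation E' = g' E.  Multiplied
   by prod_i (1 - a z x_i), eps_{a,t}(F) thus becomes the polynomial
     Phi(u, a; z) = sum_I (-u)^|I| t^C(|I|,2) A_I prod_(i in I) (1 - z x_i)
                                                   * prod_(j notin I) (1 - a z x_j),
   where A_I = prod_(i in I, j notin I) (t x_i - x_j)/(x_i - x_j), and the two identities amount
   to Phi(u, u t^(m-1); z) = prod_i (1 - u t^i) and Phi(1, a; z) = z^m prod_i x_i prod_i (t^i - a).
   Both are proved by induction on the number of variables.  For a new variable w,
   Phi(S + w) prod_(j in S) (x_j - w) is a polynomial N_S(w) of degree at most |S| + 1; pairing
   the subsets I and I + w shows that N_S vanishes at every x_j, that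
   N_S(0) = (1 - u) prod_j x_j Phi(S; u t), and that its top coefficient is a multiple of
   (a - u t^|S|) Phi(S).  Subtracting from N_S the expected value of Phi(S + w) times
   prod_(j in S) (x_j - w) leaves a polynomial of degree at most |S| with the |S| + 1 roots 0
   and x_j, which therefore vanishes. *)

From mathcomp Require Import all_boot all_order all_algebra.
From mathcomp Require Import mpoly.
From mathcomp Require Import ring zify.
From Stdlib Require Import FunctionalExtensionality.
Import GRing.Theory.
Local Open Scope ring_scope.

Set Implicit Arguments.
Unset Strict Implicit.
Unset Printing Implicit Defensive.

Section TopCoefficient.
Variable R : comNzRingType.
Implicit Types (p q : {poly R}) (c d : R).

Definition topcoef p (k : nat) c := forall j, (k <= j)%N -> p`_j = if j == k then c else 0.

Lemma topcoefD p q k c d : topcoef p k c -> topcoef q k d -> topcoef (p + q) k (c + d).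
Proof. by move=> hp hq j hj; rewrite coefD hp // hq //; case: eqP; rewrite ?addr0. Qed.

Lemma topcoefN p k c : topcoef p k c -> topcoef (- p) k (- c).
Proof. by move=> hp j hj; rewrite coefN hp //; case: eqP; rewrite ?oppr0. Qed.

Lemma topcoefB p q k c d : topcoef p k c -> topcoef q k d -> topcoef (p - q) k (c - d).
Proof. by move=> hp hq; apply/topcoefD/topcoefN. Qed.

Lemma topcoefZ a p k c : topcoef p k c -> topcoef (a *: p) k (a * c).
Proof. by move=> hp j hj; rewrite coefZ hp //; case: eqP; rewrite ?mulr0. Qed.

Lemma topcoefC c : topcoef c%:P 0 c.
Proof. by move=> j _; rewrite coefC. Qed.

Lemma topcoefX : topcoef 'X 1 1.
Proof. by move=> j _; rewrite coefX; case: eqP. Qed.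

Lemma topcoef_widen p k c n : topcoef p k c -> (k < n)%N -> topcoef p n 0.
Proof.
move=> hp lt_kn j le_nj; rewrite hp; last exact: leq_trans (ltnW lt_kn) le_nj.
by rewrite (gtn_eqF (leq_trans lt_kn le_nj)) if_same.
Qed.

Lemma topcoef_size p k : topcoef p k 0 -> (size p <= k)%N.
Proof. by move=> hp; apply/leq_sizeP => j hj; rewrite hp // if_same. Qed.

Lemma topcoefM p q k l c d :
  topcoef p k c -> topcoef q l d -> topcoef (p * q) (k + l) (c * d).
Proof.
move=> hp hq j hj; rewrite coefM (bigD1 (Ordinal (leq_trans (leq_addr l k) hj : (k < j.+1)%N))) //=.
rewrite big1 ?addr0 => [|[i lt_ij] /= ne_ik].
  rewrite hp // eqxx hq; last by lia.
  have -> : (j - k == l)%N = (j == k + l)%N by apply/eqP/eqP; lia.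
  by case: eqP; rewrite ?mulr0.
have {}ne_ik : i <> k by move=> e; rewrite -val_eqE /= e eqxx in ne_ik.
case: (ltngtP i k) => [lt_ik|lt_ki|//].
  rewrite (hq (j - i)%N); last by lia.
  have -> : (j - i == l)%N = false by apply/eqP; lia.
  by rewrite mulr0.
by rewrite hp ?(ltnW lt_ki) // (gtn_eqF lt_ki) mul0r.
Qed.

Lemma topcoef_sum (I : Type) (r : seq I) (P : pred I) (F : I -> {poly R}) (c : I -> R) k :
  (forall i, P i -> topcoef (F i) k (c i)) ->
  topcoef (\sum_(i <- r | P i) F i) k (\sum_(i <- r | P i) c i).
Proof.
move=> hF; elim/big_rec2: _ => [j _|i p q Pi hp]; first by rewrite coef0 if_same.
exact/topcoefD/hp/hF.
Qed.

Lemma topcoef_prod (I : finType) (A : {pred I}) (F : I -> {poly R}) (c : I -> R) :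
  (forall i, topcoef (F i) 1 (c i)) ->
  topcoef (\prod_(i in A) F i) #|A| (\prod_(i in A) c i).
Proof.
move=> hF; rewrite -!big_enum cardE; elim: (enum A) => [|i s IH] /=.
  by rewrite !big_nil; apply: topcoefC.
by rewrite !big_cons -add1n; apply: topcoefM.
Qed.

Definition affine c d : {poly R} := c%:P + d *: 'X.

Lemma topcoef_affine c d : topcoef (affine c d) 1 d.
Proof.
have := topcoefD (topcoef_widen (topcoefC c) (ltn0Sn 0)) (topcoefZ d topcoefX).
by rewrite add0r mulr1.
Qed.

Lemma topcoef_prod_affine (I : finType) (A : {pred I}) (c : I -> R) d :
  topcoef (\prod_(i in A) affine (c i) d) #|A| (d ^+ #|A|).
Proof. by rewrite -prodr_const; apply: topcoef_prod => i; apply: topcoef_affine. Qed.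

Lemma coef_affineM c d p n :
  (affine c d * p)`_n = c * p`_n + (if n is n'.+1 then d * p`_n' else 0).
Proof.
rewrite mulrDl coefD coefCM -scalerAl coefZ coefXM.
by case: n => [|n] /=; rewrite ?mulr0.
Qed.

Lemma deriv_affine c d : (affine c d)^`() = d%:P.
Proof. by rewrite derivD derivC derivZ derivX add0r -mul_polyC mulr1. Qed.

Lemma horner_affine c d y : (affine c d).[y] = c + d * y.
Proof. by rewrite hornerD hornerC hornerZ hornerX. Qed.

End TopCoefficient.

Lemma big_powersetU1 (T : finType) (V : nmodType) (F : {set T} -> V) (S : {set T}) l :
  l \notin S ->
  \sum_(I in powerset (l |: S)) F I = \sum_(I in powerset S) (F I + F (l |: I)).
Proof.
move=> lS; have notin_sub (I : {set T}) : I \subset S -> l \notin I.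
  by move/subsetP=> IS; apply: contra lS => /IS.
rewrite big_split /= (bigID (fun I : {set T} => l \in I)) /= addrC; congr (_ + _).
  apply: eq_bigl => I; rewrite !powersetE; apply/andP/idP => [[IlS lI]|IS].
    apply/subsetP => j jI; move/subsetP/(_ j jI): IlS; rewrite !inE.
    by case: eqP jI => [->|_ _ //=]; rewrite (negbTE lI).
  by rewrite (subset_trans IS) ?subsetUr ?notin_sub.
rewrite (reindex_onto (fun J => l |: J) (fun I => I :\ l)) /=; last first.
  by move=> I /andP [_ lI]; rewrite setD1K.
apply: eq_bigl => J; rewrite !powersetE setU11 andbT.
apply/andP/idP => [[JlS /eqP <-]|JS]; last first.
  by rewrite setU1K ?notin_sub // setUS.
apply/subsetP => j; rewrite !inE => /andP [jl jlJ].
by have := subsetP JlS j; rewrite !inE jlJ (negbTE jl) => /(_ isT).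
Qed.

Section PhiRecursion.
Variables (K : fieldType) (T : finType) (x : T -> K) (t : K).
Hypothesis x_inj : injective x.
Implicit Types (S I J : {set T}) (u a z : K).

Definition Acoef S I :=
  \prod_(i in I) \prod_(j in S :\: I) ((t * x i - x j) / (x i - x j)).

Definition wt S I u := (- u) ^+ #|I| * t ^+ 'C(#|I|, 2) * Acoef S I.

Definition factors S I a z :=
  \prod_(i in I) (1 - z * x i) * \prod_(j in S :\: I) (1 - a * z * x j).

Definition Phi S u a z := \sum_(I in powerset S) wt S I u * factors S I a z.

Lemma Phi_set0 u a z : Phi set0 u a z = 1.
Proof.
rewrite /Phi powerset0 big_set1 /wt /factors /Acoef setD0 cards0 !big_set0 bin0n.
by rewrite !expr0 !mul1r.
Qed.

Lemma setU1D_out S I l : l \notin S -> I \subset S -> (l |: S) :\: I = l |: (S :\: I).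
Proof.
move=> lS IS; rewrite setDUl; congr (_ :|: _); apply/setDidPl.
by rewrite disjoints1 (contra (subsetP IS l) lS).
Qed.

Lemma setU1D_in S J l : l \notin S -> (l |: S) :\: (l |: J) = S :\: J.
Proof.
move=> lS; apply/setP => j; rewrite !inE; case: eqVneq => [->|] //=.
by rewrite (negbTE lS) andbF.
Qed.

Lemma Acoef_setU1_out S I l : l \notin S -> I \subset S ->
  Acoef (l |: S) I = Acoef S I * \prod_(i in I) ((t * x i - x l) / (x i - x l)).
Proof.
move=> lS IS; rewrite /Acoef -big_split /=; apply: eq_bigr => i _.
have lSI : l \notin S :\: I by rewrite inE (negbTE lS) andbF.
by rewrite setU1D_out // big_setU1 //= mulrC.
Qed.

Lemma Acoef_setU1_in S I l : l \notin S -> I \subset S ->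
  Acoef (l |: S) (l |: I) = Acoef S I * \prod_(j in S :\: I) ((t * x l - x j) / (x l - x j)).
Proof.
by move=> lS IS; rewrite /Acoef setU1D_in // big_setU1 ?(contra (subsetP IS l) lS) //= mulrC.
Qed.

Lemma factors_setU1_out S I l a z : l \notin S -> I \subset S ->
  factors (l |: S) I a z = factors S I a z * (1 - a * z * x l).
Proof.
move=> lS IS; have lSI : l \notin S :\: I by rewrite inE (negbTE lS) andbF.
by rewrite /factors setU1D_out // big_setU1 //= mulrA mulrAC.
Qed.

Lemma factors_setU1_in S I l a z : l \notin S -> I \subset S ->
  factors (l |: S) (l |: I) a z = factors S I a z * (1 - z * x l).
Proof.
move=> lS IS; rewrite /factors setU1D_in // big_setU1 ?(contra (subsetP IS l) lS) //=.
by rewrite [RHS]mulrC mulrA.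
Qed.

Lemma prod_ratio_out (A : {set T}) l : l \notin A ->
  \prod_(i in A) ((t * x i - x l) / (x i - x l)) * \prod_(i in A) (x i - x l)
  = \prod_(i in A) (t * x i - x l).
Proof.
move=> lA; rewrite -big_split /=; apply: eq_bigr => i iA.
by rewrite divfK // subr_eq0 (inj_eq x_inj); apply: contraNneq lA => <-.
Qed.

Lemma prod_ratio_in (A : {set T}) l : l \notin A ->
  \prod_(j in A) ((t * x l - x j) / (x l - x j)) * \prod_(j in A) (x j - x l)
  = \prod_(j in A) (x j - t * x l).
Proof.
move=> lA; rewrite -big_split /=; apply: eq_bigr => j jA.
rewrite -[x j - x l]opprB mulrN divfK ?opprB // subr_eq0 (inj_eq x_inj).
by apply: contraNneq lA => ->.
Qed.

Definition Dpoly S : {poly K} := \prod_(j in S) affine (x j) (-1).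

(* The terms of Phi (l |: S) indexed by I and by l |: I, with the denominators x i - x l
   cleared and x l replaced by the variable. *)
Definition Npoly S u a z : {poly K} :=
  \sum_(I in powerset S) (wt S I u * factors S I a z) *:
    (\prod_(i in I) affine (t * x i) (-1) * \prod_(j in S :\: I) affine (x j) (-1)
       * affine 1 (- (a * z))
     - (u * t ^+ #|I|) *: (\prod_(i in I) affine (x i) (-1)
       * \prod_(j in S :\: I) affine (x j) (- t) * affine 1 (- z))).

Lemma horner_prod_affine (A : {set T}) (c : T -> K) d y :
  (\prod_(i in A) affine (c i) d).[y] = \prod_(i in A) (c i + d * y).
Proof. by rewrite horner_prod; apply: eq_bigr => i _; rewrite horner_affine. Qed.

Lemma horner_Dpoly S y : (Dpoly S).[y] = \prod_(j in S) (x j - y).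
Proof. by rewrite horner_prod_affine mulN1r. Qed.

Lemma horner_Npoly S u a z y : (Npoly S u a z).[y] =
  \sum_(I in powerset S) wt S I u * factors S I a z *
    (\prod_(i in I) (t * x i - y) * \prod_(j in S :\: I) (x j - y) * (1 - a * z * y)
     - u * t ^+ #|I| * (\prod_(i in I) (x i - y) * \prod_(j in S :\: I) (x j - t * y)
                        * (1 - z * y))).
Proof.
rewrite horner_sum; apply: eq_bigr => I _.
rewrite hornerZ hornerD hornerN hornerZ !hornerM !horner_prod_affine !horner_affine.
by rewrite !mulN1r !mulNr !mulrA.
Qed.

Lemma Phi_setU1 S l u a z : l \notin S ->
  Phi (l |: S) u a z * (Dpoly S).[x l] = (Npoly S u a z).[x l].
Proof.
move=> lS; rewrite /Phi big_powersetU1 // mulr_suml horner_Npoly.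
apply: eq_bigr => I; rewrite powersetE => IS.
have lI := contra (subsetP IS l) lS.
have lSI : l \notin S :\: I by rewrite inE (negbTE lS) andbF.
rewrite /wt Acoef_setU1_out // Acoef_setU1_in // factors_setU1_out // factors_setU1_in //.
rewrite cardsU1 lI add1n horner_Dpoly (big_setID (A := S) I) /= (setIidPr IS).
rewrite -(prod_ratio_out lI) -(prod_ratio_in lSI) binS bin1 exprD exprS.
ring.
Qed.

Lemma horner_Npoly_setU1 S l u a z : l \notin S -> (Npoly (l |: S) u a z).[x l] = 0.
Proof.
move=> lS; rewrite horner_Npoly big_powersetU1 //; apply: big1 => J; rewrite powersetE => JS.
have lJ := contra (subsetP JS l) lS.
have lSJ : l \notin S :\: J by rewrite inE (negbTE lS) andbF.
rewrite /wt Acoef_setU1_out // Acoef_setU1_in // factors_setU1_out // factors_setU1_in //.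
rewrite cardsU1 lJ add1n setU1D_out // setU1D_in // !big_setU1 //= !subrr.
rewrite -(prod_ratio_out lJ) -(prod_ratio_in lSJ) binS bin1 exprD exprS.
ring.
Qed.

Lemma Npoly_root S u a z j : j \in S -> (Npoly S u a z).[x j] = 0.
Proof. by move=> jS; rewrite -(setD1K jS) horner_Npoly_setU1 // setD11. Qed.

Lemma Dpoly_root S j : j \in S -> (Dpoly S).[x j] = 0.
Proof. by move=> jS; rewrite horner_Dpoly (bigD1 j) //= subrr mul0r. Qed.

Lemma horner_Npoly0 S u a z :
  (Npoly S u a z).[0] = (Dpoly S).[0] * ((1 - u) * Phi S (u * t) a z).
Proof.
have sub0 (A : {set T}) (f : T -> K) : \prod_(i in A) (f i - 0) = \prod_(i in A) f i.
  by apply: eq_bigr => i _; rewrite subr0.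
rewrite horner_Npoly horner_Dpoly /Phi !mulr_sumr; apply: eq_bigr => I; rewrite powersetE => IS.
rewrite (big_setID (A := S) I) /= (setIidPr IS) /wt !mulr0 !subr0.
rewrite (sub0 _ (fun i => t * x i)) !(sub0 _ x) -[- (u * t)]mulNr exprMn big_split /= prodr_const.
ring.
Qed.

Lemma topcoef_Npoly S u a z : topcoef (Npoly S u a z) #|S|.+1
  ((-1) ^+ #|S|.+1 * z * (a - u * t ^+ #|S|) * Phi S u a z).
Proof.
rewrite /Phi mulr_sumr; apply: topcoef_sum => I; rewrite powersetE => IS.
have cardS : (#|I| + #|S :\: I|)%N = #|S| by rewrite -(cardsID I S) (setIidPr IS).
have := topcoefZ (wt S I u * factors S I a z) (topcoefB
  (topcoefM (topcoefM (topcoef_prod_affine (A := I) (fun i => t * x i) (-1))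
                      (topcoef_prod_affine (A := S :\: I) x (-1))) (topcoef_affine 1 (- (a * z))))
  (topcoefZ (u * t ^+ #|I|) (topcoefM (topcoefM (topcoef_prod_affine (A := I) x (-1))
                      (topcoef_prod_affine (A := S :\: I) x (- t))) (topcoef_affine 1 (- z))))).
rewrite cardS addn1 => top j le_Sj; rewrite top //; case: eqP => // _.
by rewrite -cardS [(- t) ^+ _]exprNn !exprS !exprD; ring.
Qed.

Lemma topcoef_Dpoly S : topcoef (Dpoly S) #|S| ((-1) ^+ #|S|).
Proof. exact: topcoef_prod_affine. Qed.

Lemma Phi_setU1_interp S l (P : {poly K}) u a z :
  l \notin S -> (forall j, j \in S -> x j != 0) ->
  (size (Npoly S u a z - Dpoly S * P)%R <= #|S|.+1)%N ->
  (Npoly S u a z - Dpoly S * P).[0] = 0 ->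
  Phi (l |: S) u a z = P.[x l].
Proof.
move=> lS xS_neq0 size_le root0.
have NDP : Npoly S u a z = Dpoly S * P.
  apply/eqP; rewrite -subr_eq0; apply/eqP.
  apply: (@roots_geq_poly_eq0 _ _ (0 :: [seq x j | j <- enum S])).
  - rewrite /= [root _ 0]/root root0 eqxx /=; apply/allP => y /mapP [j]; rewrite mem_enum => jS ->.
    by rewrite /root hornerD hornerN hornerM Npoly_root // Dpoly_root // mul0r subrr.
  - rewrite /= map_inj_uniq ?enum_uniq // andbT.
    by apply/negP => /mapP [j]; rewrite mem_enum => /xS_neq0 /eqP nz /esym.
  - by rewrite /= size_map -cardE.
have Dl_neq0 : (Dpoly S).[x l] != 0.
  rewrite horner_Dpoly; apply/prodf_neq0 => j jS; rewrite subr_eq0 (inj_eq x_inj).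
  by apply: contraNneq lS => <-.
by apply: (mulIf Dl_neq0); rewrite Phi_setU1 // NDP hornerM mulrC.
Qed.

(* Phi_setU1_interp uses 0 as an extra interpolation node, so the point split off must be
   the one where x vanishes, if there is one. *)
Lemma setU1_decomp_nonzero S n : #|S| = n.+1 ->
  exists S' l, [/\ S = l |: S', l \notin S', #|S'| = n & forall j, j \in S' -> x j != 0].
Proof.
move=> cardS; suff [l lS xS'_neq0] : exists2 l, l \in S & forall j, j \in S :\ l -> x j != 0.
  exists (S :\ l), l; split; rewrite ?setD1K ?setD11 //.
  by move: cardS; rewrite (cardsD1 l S) lS add1n => -[].
case: (pickP (fun j => (j \in S) && (x j == 0))) => [l /andP [lS /eqP xl0]|none].
  exists l => // j; rewrite !inE => /andP [jl _]; apply: contraNneq jl => xj0.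
  by rewrite -(inj_eq x_inj) xj0 xl0.
have /set0Pn [l lS] : S != set0 by rewrite -card_gt0 cardS.
exists l => // j; rewrite !inE => /andP [_ jS].
by have := none j; rewrite jS => /negbT.
Qed.

Theorem Phi_const n S u z :
  #|S| = n -> Phi S u (u * t ^+ n.-1) z = \prod_(i < n) (1 - u * t ^+ i).
Proof.
elim: n S u => [|n IH] S u cardS; first by rewrite (cards0_eq cardS) Phi_set0 big_ord0.
have [S' [l [-> lS' cardS' xS'_neq0]]] := setU1_decomp_nonzero cardS.
have Phi' : Phi S' (u * t) (u * t ^+ n) z = \prod_(i < n) (1 - u * t ^+ i.+1).
  case: n {cardS} IH cardS' => [|n] IH cardS'.
    by rewrite (cards0_eq cardS') Phi_set0 big_ord0.
  by rewrite exprS mulrA (IH _ _ cardS'); apply: eq_bigr => i _; rewrite exprS mulrA.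
set C := \prod_(i < n.+1) _; rewrite -[C](hornerC _ (x l)) /=.
apply: Phi_setU1_interp => //.
  have topDC := topcoefM (topcoef_Dpoly (S := S')) (topcoefC C); rewrite addn0 in topDC.
  have := topcoefB (topcoef_Npoly (S := S') u (u * t ^+ n) z) (topcoef_widen topDC (ltnSn _)).
  by rewrite cardS' subrr mulr0 mul0r subrr; apply: topcoef_size.
have -> : C = (1 - u) * \prod_(i < n) (1 - u * t ^+ i.+1).
  by rewrite /C big_ord_recl expr0 mulr1; congr (_ * _); apply: eq_bigr => i _; rewrite lift0.
by rewrite hornerD hornerN hornerM hornerC horner_Npoly0 Phi' subrr.
Qed.

Theorem Phi_u1 n S a z : #|S| = n ->
  Phi S 1 a z = z ^+ n * \prod_(j in S) x j * \prod_(i < n) (t ^+ i - a).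
Proof.
elim: n S => [|n IH] S cardS.
  by rewrite (cards0_eq cardS) Phi_set0 big_set0 big_ord0 expr0 !mulr1.
have [S' [l [-> lS' cardS' xS'_neq0]]] := setU1_decomp_nonzero cardS.
set c := z ^+ n.+1 * \prod_(j in S') x j * \prod_(i < n.+1) (t ^+ i - a).
have -> : z ^+ n.+1 * \prod_(j in l |: S') x j * \prod_(i < n.+1) (t ^+ i - a) = (c *: 'X).[x l].
  by rewrite hornerZ hornerX /c big_setU1 //=; ring.
apply: Phi_setU1_interp => //.
  have topDX := topcoefM (topcoef_Dpoly (S := S')) (topcoefZ c (topcoefX K)).
  rewrite addn1 in topDX.
  have := topcoefB (topcoef_Npoly (S := S') 1 a z) topDX.
  rewrite cardS' (IH _ cardS') /c big_ord_recr /= !exprS => top.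
  by apply: topcoef_size => j le_nj; rewrite top //; case: eqP => // _; ring.
by rewrite hornerD hornerN hornerM hornerZ hornerX horner_Npoly0 subrr !mul0r !mulr0 subrr.
Qed.

End PhiRecursion.

Section Truncation.
Variable R : comNzRingType.
Implicit Types (p q r s : {poly R}) (f g : nat -> R).

Definition agree_upto (N : nat) f p := forall n, (n <= N)%N -> f n = p`_n.

Definition eqmodX (N : nat) p q := forall n, (n < N)%N -> p`_n = q`_n.

Lemma agree_psmul N f g p q :
  agree_upto N f p -> agree_upto N g q -> agree_upto N (psmul f g) (p * q).
Proof.
move=> hf hg n le_nN; rewrite /psmul coefM; apply: eq_bigr => -[i lt_in] _ /=.
by rewrite hf ?hg //; lia.
Qed.

Lemma agree_big N (I : Type) (r : seq I) (P : pred I) (F : I -> nat -> R) (p : I -> {poly R}) :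
  (forall i, P i -> agree_upto N (F i) (p i)) ->
  agree_upto N (\big[@psmul R/@ps1 R]_(i <- r | P i) F i) (\prod_(i <- r | P i) p i).
Proof.
move=> hF; elim/big_rec2: _ => [n _|i f q Pi hf]; first by rewrite coef1.
exact/agree_psmul/hf/hF.
Qed.

Lemma agree_pspow N f p k : agree_upto N f p -> agree_upto N (pspow f k) (p ^+ k).
Proof.
move=> hf; elim: k => [n _|k IH]; first by rewrite coef1.
by rewrite exprS; apply: agree_psmul.
Qed.

Definition geo_poly (M : nat) (c : R) : {poly R} := \poly_(i < M) c ^+ i.

Lemma coef_geo_poly M c n : (geo_poly M c)`_n = if (n < M)%N then c ^+ n else 0.
Proof. exact: coef_poly. Qed.

Lemma agree_geo N c : agree_upto N (geo c) (geo_poly N.+1 c).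
Proof. by move=> n le_nN; rewrite coef_geo_poly ltnS le_nN. Qed.

Lemma agree_psshift N m f p : agree_upto N f p -> agree_upto N (psshift m f) ('X^m * p).
Proof.
move=> hf n le_nN; rewrite /psshift coefXnM ltnNge.
by case: leqP => // le_mn; rewrite hf // (leq_trans (leq_subr m n)).
Qed.

Lemma agreeZ N c f p : agree_upto N f p -> agree_upto N (fun n => c * f n) (c *: p).
Proof. by move=> hf n le_nN; rewrite coefZ hf. Qed.

Lemma agree_eqmodX N f p q : agree_upto N f p -> eqmodX N.+1 p q -> agree_upto N f q.
Proof. by move=> hf pq n le_nN; rewrite hf // pq. Qed.

Lemma eqmodX_sym N p q : eqmodX N p q -> eqmodX N q p.
Proof. by move=> pq n lt_nN; rewrite pq. Qed.

Lemma eqmodX_trans N q p r : eqmodX N p q -> eqmodX N q r -> eqmodX N p r.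
Proof. by move=> pq qr n lt_nN; rewrite pq // qr. Qed.

Lemma eqmodXD N p q r s : eqmodX N p q -> eqmodX N r s -> eqmodX N (p + r) (q + s).
Proof. by move=> pq rs n lt_nN; rewrite !coefD pq // rs. Qed.

Lemma eqmodXB N p q r s : eqmodX N p q -> eqmodX N r s -> eqmodX N (p - r) (q - s).
Proof. by move=> pq rs n lt_nN; rewrite !coefB pq // rs. Qed.

Lemma eqmodXZ N c p q : eqmodX N p q -> eqmodX N (c *: p) (c *: q).
Proof. by move=> pq n lt_nN; rewrite !coefZ pq. Qed.

Lemma eqmodXM N p q r s : eqmodX N p q -> eqmodX N r s -> eqmodX N (p * r) (q * s).
Proof.
move=> pq rs n lt_nN; rewrite !coefM; apply: eq_bigr => -[i lt_in] _ /=.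
by rewrite pq ?rs //; lia.
Qed.

Lemma eqmodX_sum N (I : Type) (r : seq I) (P : pred I) (F G : I -> {poly R}) :
  (forall i, P i -> eqmodX N (F i) (G i)) ->
  eqmodX N (\sum_(i <- r | P i) F i) (\sum_(i <- r | P i) G i).
Proof. by move=> hFG; elim/big_rec2: _ => // i p q Pi pq; apply/eqmodXD/pq/hFG. Qed.

Lemma eqmodX_prod N (I : Type) (r : seq I) (P : pred I) (F G : I -> {poly R}) :
  (forall i, P i -> eqmodX N (F i) (G i)) ->
  eqmodX N (\prod_(i <- r | P i) F i) (\prod_(i <- r | P i) G i).
Proof. by move=> hFG; elim/big_rec2: _ => // i p q Pi pq; apply/eqmodXM/pq/hFG. Qed.

Lemma eqmodX_affine_cancel N c p q :
  eqmodX N (affine 1 c * p) (affine 1 c * q) -> eqmodX N p q.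
Proof.
move=> h; elim=> [|n IH] lt_nN; first by have := h 0%N lt_nN; rewrite !coef_affineM !mul1r !addr0.
by have := h n.+1 lt_nN; rewrite !coef_affineM !mul1r IH ?(ltnW lt_nN) // => /addIr.
Qed.

Lemma eqmodX_affine_geo M c : eqmodX M (affine 1 (- c) * geo_poly M c) 1.
Proof.
move=> n lt_nM; rewrite coef_affineM coef1 !coef_geo_poly lt_nM mul1r.
case: n lt_nM => [|n] lt_nM; first by rewrite expr0 addr0.
by rewrite coef_geo_poly (ltnW lt_nM) exprS mulNr subrr.
Qed.

Lemma eqmodX_prod_affine_geo N (I : finType) (P : pred I) (c : I -> R) :
  eqmodX N (\prod_(i | P i) (affine 1 (- c i) * geo_poly N (c i))) 1.
Proof.
apply: (@eqmodX_trans _ (\prod_(i | P i) 1)); last by rewrite big1_eq.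
by apply: eqmodX_prod => i _; apply: eqmodX_affine_geo.
Qed.

Lemma eqmodX_affine_deriv_geo N c :
  eqmodX N (affine 1 (- c) * (geo_poly N.+1 c)^`()) (c%:P * geo_poly N.+1 c).
Proof.
move=> n lt_nN; rewrite coef_affineM coefCM mul1r !coef_deriv !coef_geo_poly !ltnS lt_nN.
case: n lt_nN => [|n] lt_nN; first by rewrite addr0 expr1 expr0 mulr1.
rewrite coef_deriv coef_geo_poly ltnS (ltnW lt_nN) !exprS -!mulrnAr mulrSr.
ring.
Qed.

End Truncation.

Section PcharZero.
Variable K : fieldType.
Hypothesis K0 : [pchar K] =i pred0.

Lemma natrS_neq0 n : n.+1%:R != 0 :> K.
Proof. by rewrite ((pcharf0P K).1 K0). Qed.

Lemma natf_inj i j : i%:R = j%:R :> K -> i = j.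
Proof.
wlog le_ij : i j / (i <= j)%N => [hw|].
  by case: (leqP i j) => [/hw//|/ltnW le_ji /esym /hw ->].
move/eqP; rewrite eq_sym -subr_eq0 -natrB // ((pcharf0P K).1 K0) subn_eq0 => le_ji.
by apply/eqP; rewrite eqn_leq le_ij.
Qed.

Lemma eq_poly_horner (p q : {poly K}) : (forall z, p.[z] = q.[z]) -> p = q.
Proof.
move=> pq; apply/eqP; rewrite -subr_eq0; apply/eqP.
apply: (@roots_geq_poly_eq0 _ _ [seq i%:R | i <- iota 0 (size (p - q))]).
- by apply/allP => _ /mapP [i _ ->]; rewrite /root hornerD hornerN pq subrr.
- by rewrite map_inj_uniq ?iota_uniq // => i j /natf_inj.
- by rewrite size_map size_iota.
Qed.

End PcharZero.

Section TruncatedExp.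
Variable K : fieldType.
Hypothesis K0 : [pchar K] =i pred0.
Implicit Types (p h E Q : {poly K}).

Definition exp_trunc N p := \sum_(k < N.+1) (k`!%:R)^-1 *: p ^+ k.

Lemma coef_expr_small p k j : p`_0 = 0 -> (j < k)%N -> (p ^+ k)`_j = 0.
Proof.
move=> p0; elim: k j => [|k IH] j // lt_jk.
rewrite exprS coefM big1 // => -[[|i] lt_ij] _ /=; first by rewrite p0 mul0r.
by rewrite IH ?mulr0 //; lia.
Qed.

Lemma deriv_exp_trunc N p : p`_0 = 0 ->
  eqmodX N (exp_trunc N p)^`() (p^`() * exp_trunc N p).
Proof.
move=> p0; have -> : (exp_trunc N p)^`() = p^`() * \sum_(k < N) (k`!%:R)^-1 *: p ^+ k.
  rewrite /exp_trunc raddf_sum big_ord_recl /= derivZ expr0 derivC scaler0 add0r mulr_sumr.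
  apply: eq_bigr => i _; rewrite -[bump 0 i]/(i.+1) derivZ deriv_exp /=.
  rewrite -scalerAr -scaler_nat scalerA.
  congr (_ *: _); rewrite factS natrM invfM mulrAC mulVf ?mul1r //; exact: natrS_neq0 K0 i.
move=> n lt_nN; rewrite /exp_trunc [in RHS]big_ord_recr /= mulrDr coefD.
suff -> : (p^`() * ((N`!%:R)^-1 *: p ^+ N))`_n = 0 by rewrite addr0.
rewrite coefM big1 // => -[i lt_in] _ /=.
by rewrite coefZ coef_expr_small ?mulr0 //; lia.
Qed.

Lemma eqmodX_ode_eq0 N E h : E`_0 = 0 -> eqmodX N E^`() (h * E) -> eqmodX N.+1 E 0.
Proof.
move=> E0 hE; elim/ltn_ind => -[|n] IH lt_nN; rewrite coef0 //.
have /eqP := hE n lt_nN; rewrite coef_deriv coefM big1 => [|[i lt_in] _]; last first.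
  by rewrite IH ?coef0 ?mulr0 //; lia.
by rewrite -mulr_natr mulf_eq0 (negbTE (natrS_neq0 K0 n)) orbF => /eqP.
Qed.

Lemma eqmodX_ode N E Q h : E`_0 = Q`_0 ->
  eqmodX N E^`() (h * E) -> eqmodX N Q^`() (h * Q) -> eqmodX N.+1 E Q.
Proof.
move=> EQ0 hE hQ n lt_nN; apply/eqP; rewrite -subr_eq0 -coefB.
have hEQ : eqmodX N (E - Q)^`() (h * (E - Q)) by rewrite derivB mulrBr; apply: eqmodXB.
by rewrite (eqmodX_ode_eq0 _ hEQ) ?coef0 // coefB EQ0 subrr.
Qed.

Variable a : K.

(* Truncations of log((1 - z)/(1 - a z)) and of (1 - z)/(1 - a z). *)
Definition log_ratio_coef (r : nat) : K := if r == 0%N then 0 else - ((1 - a ^+ r) / r%:R).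

Definition log_ratio N : {poly K} := \poly_(r < N.+1) log_ratio_coef r.

Definition ratio_poly N : {poly K} := affine 1 (-1) * geo_poly N.+1 a.

Lemma deriv_log_ratio N : (log_ratio N)^`() = a%:P * geo_poly N a - geo_poly N 1.
Proof.
apply/polyP => i; rewrite coef_deriv coef_poly coefB coefCM !coef_geo_poly ltnS.
case: ltnP => _; last by rewrite mul0rn mulr0 subr0.
rewrite /log_ratio_coef /= -mulr_natr expr1n exprS; have := natrS_neq0 K0 i.
by rewrite -natr1 addrC => ?; field.
Qed.

Lemma ratio_poly_ode N :
  eqmodX N (ratio_poly N)^`() ((log_ratio N)^`() * ratio_poly N).
Proof.
(* After multiplication by (1 - X)(1 - a X), both sides are (a - 1)(1 - X) G modulo X^N. *)
set G := geo_poly N.+1 a; set L1 : {poly K} := affine 1 (-1); set La : {poly K} := affine 1 (- a).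
apply: (@eqmodX_affine_cancel _ _ (-1)); apply: (@eqmodX_affine_cancel _ _ (- a)).
rewrite -/L1 -/La; apply: (@eqmodX_trans _ _ ((a%:P * L1 - La) * (L1 * G))).
  rewrite /ratio_poly derivM deriv_affine -/G -/L1.
  have -> : La * (L1 * ((-1)%:P * G + L1 * G^`())) = - L1 * (La * G) + L1 * L1 * (La * G^`()).
    by rewrite polyCN polyC1; ring.
  have -> : (a%:P * L1 - La) * (L1 * G) = - L1 * (La * G) + L1 * L1 * (a%:P * G) by ring.
  by apply: eqmodXD => //; apply: eqmodXM => //; apply: eqmodX_affine_deriv_geo.
rewrite deriv_log_ratio /ratio_poly -/G -/L1.
have -> : La * (L1 * ((a%:P * geo_poly N a - geo_poly N 1) * (L1 * G))) =
  (a%:P * L1 * (La * geo_poly N a) - La * (L1 * geo_poly N 1)) * (L1 * G) by ring.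
apply: eqmodXM => //; apply: eqmodX_sym; apply: eqmodXB;
  by rewrite -[X in eqmodX _ _ X]mulr1; apply: eqmodXM => //; apply: eqmodX_affine_geo.
Qed.

Lemma coef_exp_log_ratio N : (exp_trunc N (log_ratio N))`_N = (ratio_poly N)`_N.
Proof.
have log0 : (log_ratio N)`_0 = 0 by rewrite coef_poly.
apply: (eqmodX_ode _ (deriv_exp_trunc (N := N) log0) (@ratio_poly_ode N) (ltnSn N)).
rewrite coef_sum big_ord_recl big1 => [|i _]; last by rewrite coefZ coef_expr_small ?mulr0.
by rewrite coef_affineM coef_geo_poly /= expr0 coefZ coef1 invr1 !mulr1 addr0.
Qed.

Lemma coef_ratio_poly N : (ratio_poly N)`_N = a ^+ N - (if N is N'.+1 then a ^+ N' else 0).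
Proof.
rewrite coef_affineM mul1r coef_geo_poly ltnSn.
by case: N => [|N]; rewrite ?subr0 ?addr0 // coef_geo_poly ltnW // mulN1r.
Qed.

End TruncatedExp.

Lemma meval_pspow (R : comNzRingType) n (v : 'I_n.+1 -> R) (f : nat -> {mpoly R[n.+1]}) k j :
  (pspow f k j).@[v] = pspow (fun r => (f r).@[v]) k j.
Proof.
elim: k j => [|k IH] j; first by rewrite /pspow /= /ps1 rmorph_nat.
rewrite /pspow !iterS -!/(pspow _ _) /psmul (big_morph _ (mevalD v) (meval0 v)).
by apply: eq_bigr => i _; rewrite mevalM IH.
Qed.

Section Specialization.
Variable K : fieldType.
Hypothesis K0 : [pchar K] =i pred0.
Variables a t : K.
Hypothesis t_pow_neq1 : forall r : nat, (0 < r)%N -> t ^+ r != 1.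

Lemma eps_hcoef n : eps a t (hcoef t n) = (ratio_poly a n)`_n.
Proof.
rewrite -coef_exp_log_ratio // /eps /hcoef /psexp (big_morph _ (mevalD _) (meval0 _)).
rewrite /exp_trunc coef_sum; apply: eq_bigr => k _.
rewrite mevalZ coefZ meval_pspow; congr (_ * _).
apply: (agree_pspow k _ (leqnn n)) => r le_rn; rewrite coef_poly ltnS le_rn /log_ratio_coef.
case: r le_rn => [|r] le_rn /=; first by rewrite meval0.
rewrite mevalZ /psum mevalXU inordK; last exact: ltnW.
have tr_neq0 : 1 - t ^+ r.+1 != 0 by rewrite subr_eq0 eq_sym t_pow_neq1.
have := natrS_neq0 K0 r; rewrite -natr1 addrC => r_neq0.
by field; rewrite r_neq0 tr_neq0.
Qed.

Lemma agree_eprod N w : agree_upto N (eprod a t w) (affine 1 (- w) * geo_poly N.+1 (a * w)).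
Proof.
move=> n le_nN; rewrite /eprod eps_hcoef coef_ratio_poly coef_affineM mul1r.
rewrite coef_geo_poly ltnS le_nN.
case: n le_nN => [|n] le_nN; first by rewrite !expr0 subr0 addr0 mulr1.
by rewrite coef_geo_poly ltnS (ltnW le_nN) !exprMn !exprS; ring.
Qed.

End Specialization.

Lemma prod_subr_div_expr (K : fieldType) (t a : K) n : t != 0 ->
  t ^+ 'C(n, 2) * \prod_(i < n) (1 - a / t ^+ i) = \prod_(i < n) (t ^+ i - a).
Proof.
move=> t_neq0; elim: n => [|n IH]; first by rewrite !big_ord0 bin0n expr0 mulr1.
rewrite !big_ord_recr /= -IH binS bin1 exprD.
have tn_neq0 : t ^+ n != 0 by rewrite expf_neq0.
by field.
Qed.

Section Main.
Variables (K : fieldType) (m : nat) (x : 'I_m -> K) (t : K).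
Hypothesis K0 : [pchar K] =i pred0.
Hypothesis x_inj : injective x.
Hypothesis t_pow_neq1 : forall r : nat, (0 < r)%N -> t ^+ r != 1.

Definition Phi_poly u a : {poly K} :=
  \sum_(I : {set 'I_m}) wt x t setT I u *:
    (\prod_(i in I) affine 1 (- x i) * \prod_(j in ~: I) affine 1 (- (a * x j))).

Lemma horner_Phi_poly u a z : (Phi_poly u a).[z] = Phi x t setT u a z.
Proof.
rewrite /Phi powersetT horner_sum; apply: eq_big => [I|I _]; first by rewrite inE.
rewrite hornerZ hornerM !horner_prod /factors setTD.
by congr (_ * (_ * _)); apply: eq_bigr => i _; rewrite horner_affine; ring.
Qed.

Lemma Phi_poly_const u : Phi_poly u (u * t ^+ m.-1) = (\prod_(i < m) (1 - u * t ^+ i))%:P.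
Proof.
apply: (eq_poly_horner K0) => z.
by rewrite horner_Phi_poly hornerC (Phi_const t x_inj) // cardsT card_ord.
Qed.

Lemma Phi_poly_u1 a : Phi_poly 1 a = (\prod_(i < m) x i * \prod_(i < m) (t ^+ i - a)) *: 'X^m.
Proof.
apply: (eq_poly_horner K0) => z.
rewrite horner_Phi_poly hornerZ hornerXn (Phi_u1 t x_inj (n := m)) ?cardsT ?card_ord //.
rewrite (eq_bigl xpredT) => [|i]; last by rewrite inE.
by rewrite [RHS]mulrC mulrA.
Qed.

Lemma agree_epsF N u a :
  agree_upto N (epsF u a t x) (Phi_poly u a * \prod_(i < m) geo_poly N.+1 (a * x i)).
Proof.
apply: (@agree_eqmodX _ _ _ (\sum_(I : {set 'I_m}) wt x t setT I u *:
  \prod_(i in I) (affine 1 (- x i) * geo_poly N.+1 (a * x i)))).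
  move=> n le_nN; rewrite /epsF coef_sum; apply: eq_bigr => I _.
  rewrite coefZ /wt /Acoef setTD; congr (_ * _).
  by apply: agree_big le_nN => i _; apply: agree_eprod.
rewrite /Phi_poly mulr_suml; apply: eqmodX_sum => I _; rewrite -scalerAl; apply: eqmodXZ.
set GI := \prod_(i in I) geo_poly N.+1 (a * x i).
set GC := \prod_(i in ~: I) geo_poly N.+1 (a * x i).
set LC := \prod_(i in ~: I) affine 1 (- (a * x i)).
have -> : \prod_(i < m) geo_poly N.+1 (a * x i) = GI * GC.
  by rewrite (bigID (mem I)) /=; congr (_ * _); apply: eq_bigl => i; rewrite inE.
rewrite big_split /= mulrACA -[X in eqmodX _ X _]mulr1; apply: eqmodXM => //.
by apply: eqmodX_sym; rewrite /LC /GC -big_split; apply: eqmodX_prod_affine_geo.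
Qed.

End Main.

Theorem lemma3p2 (K : fieldType) (m : nat) (x : 'I_m -> K) (t u a : K) :
  [pchar K] =i pred0 ->
  injective x ->
  (forall r : nat, (0 < r)%N -> t ^+ r != 1) ->
  t != 0 ->
  epsF u (u * t ^+ m.-1) t x =
    (fun n => (\prod_(i < m) (1 - u * t ^+ (m.-1 - i)%N))
              * (\big[@psmul K/@ps1 K]_(i < m) geo (u * t ^+ m.-1 * x i)) n)
  /\
  epsF 1 a t x =
    psshift m (fun n => t ^+ 'C(m, 2) * (\prod_(i < m) x i)
              * (\prod_(i < m) (1 - a / t ^+ i))
              * (\big[@psmul K/@ps1 K]_(i < m) geo (a * x i)) n).
Proof.
move=> K0 x_inj t_pow_neq1 t_neq0.
have agree_geo_prod c N : agree_upto N (\big[@psmul K/@ps1 K]_(i < m) geo (c * x i))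
                                      (\prod_(i < m) geo_poly N.+1 (c * x i)).
  by apply: agree_big => i _; apply: agree_geo.
split; apply: functional_extensionality => n.
  rewrite (agree_epsF x K0 t_pow_neq1 u _ (leqnn n)) (Phi_poly_const t K0 x_inj) coefCM.
  rewrite (agree_geo_prod _ n n (leqnn n)); congr (_ * _).
  rewrite (reindex_inj rev_ord_inj) /=; apply: eq_bigr => i _.
  by congr (1 - u * t ^+ _); lia.
rewrite (agree_epsF x K0 t_pow_neq1 1 a (leqnn n)) (Phi_poly_u1 t K0 x_inj).
rewrite (agree_psshift m (agreeZ _ (agree_geo_prod a n)) (leqnn n)).
rewrite -scalerAl -scalerAr !coefZ; congr (_ * _).
by rewrite -prod_subr_div_expr // mulrCA mulrA.
Qed.
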